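(* Let $G$ be a finite simple graph, $\mathbb{K}$ a field, $d$ a nonnegative integer, and let $z$ be a $d$-cycle of $\mathrm{cl}(G)$ (over $\mathbb{K}$) which is $d$-minimal for $G$. Let $v\in z_0$. Then the $(d-1)$-cycle $\mathrm{lk}_z(v)$ is homologically nontrivial in $\mathrm{cl}(G[N_z(v)])$.
   Context: $\mathrm{cl}(G)$ is the clique complex of $G$. A $d$-cycle $z=\sum_\sigma a_\sigma\sigma$ of $\mathrm{cl}(G)$ is a nontrivial homology $d$-cycle if it is not a boundary; its vertex support $z_0$ is the set of vertices lying in some $d$-face $\sigma$ with $a_\sigma\neq0$. A nontrivial homology $d$-cycle $z$ is $d$-minimal for $G$ if no proper subset of $z_0$ is the vertex support of a nontrivial homology $d$-cycle of $\mathrm{cl}(G)$. For $v\in z_0$, $N_z(v)=N_G(v)\cap z_0$ (with $N_G(v)$ the set of neighbors of $v$), $G[A]$ is the induced subgraph on $A$, and $\mathrm{lk}_z(v)$ is the $(d-1)$-chain obtained from $z$ by the link map, i.e. the chain $\sum_{\sigma\ni v}\pm a_\sigma(\sigma\setminus\{v\})$ (with the sign making $\partial$ of the star part of $z$ compatible), which is a $(d-1)$-cycle supported in $\mathrm{cl}(G[N_z(v)])$. *)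

(* Simplicial (augmented, i.e. reduced) homology of clique
   complexes over a field K. Faces are vertex sets; the empty set is the unique
   (-1)-face. A d-face is a clique of size d+1. Chains are finitely supported
   functions {set T} -> K; orientation is induced by the linear order
   enum_rank on the vertex type T. *)
From HB Require Import structures.
From mathcomp Require Import all_boot all_order all_algebra.
Set Implicit Arguments. Unset Strict Implicit. Unset Printing Implicit Defensive.
Import Order.TTheory GRing.Theory Num.Theory.
Local Open Scope ring_scope.

Section CliqueHomology.
Variables (K : fieldType) (T : finType).

Definition chain := {ffun {set T} -> K}.

(* s is a face of cl(G[A]): a clique of G contained in A *)
Definition is_clique (e : rel T) (A s : {set T}) : bool :=
  (s \subset A) && [forall u in s, forall w in s, (u != w) ==> e u w].

Definition fsign (v : T) (s : {set T}) : K :=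
  (-1) ^+ #|[set u in s | (enum_rank u < enum_rank v)%N]|.

(* c is a chain of cl(G[A]) of faces of size k (dimension k-1) *)
Definition is_chain (e : rel T) (A : {set T}) (k : nat) (c : chain) : Prop :=
  forall s, c s != 0 -> is_clique e A s /\ #|s| = k.

(* boundary: d(s) = sum_{v in s} (-1)^{pos(v,s)} (s \ v) *)
Definition bnd (c : chain) : chain :=
  [ffun t : {set T} => \sum_(v : T | v \notin t) fsign v (v |: t) * c (v |: t)].

Definition is_boundary (e : rel T) (A : {set T}) (k : nat) (c : chain) : Prop :=
  exists b, is_chain e A k.+1 b /\ bnd b = c.

Definition nontriv_cycle (e : rel T) (A : {set T}) (k : nat) (c : chain) : Prop :=
  [/\ is_chain e A k c, bnd c = 0 & ~ is_boundary e A k c].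

Definition vsupp (z : chain) : {set T} :=
  [set v | [exists s : {set T}, (z s != 0) && (v \in s)]].

Definition d_minimal (e : rel T) (d : nat) (z : chain) : Prop :=
  nontriv_cycle e setT d.+1 z /\
  forall z' : chain, nontriv_cycle e setT d.+1 z' -> ~ (vsupp z' \proper vsupp z).

Definition Nz (e : rel T) (z : chain) (v : T) : {set T} :=
  [set u | e v u & u \in vsupp z].

Definition lk (z : chain) (v : T) : chain :=
  [ffun t : {set T} => if v \in t then 0 else fsign v (v |: t) * z (v |: t)].

End CliqueHomology.

From HB Require Import structures.
From mathcomp Require Import all_boot all_order all_algebra.
From mathcomp Require Import ring.
Set Implicit Arguments. Unset Strict Implicit. Unset Printing Implicit Defensive.
Import Order.TTheory GRing.Theory Num.Theory.
Local Open Scope ring_scope.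

(* If lk_z(v) were the boundary of a chain b of cl(G[N_z(v)]), the cone v * b
   would be a chain of cl(G), and the cone formula
   d(v * b) = b - v * db = b - v * lk_z(v) shows that the homologous cycle
   z + d(v * b) has no face through v, the faces of z through v being exactly
   v * lk_z(v).  Its vertex support then lies in z_0 minus v, contradicting
   d-minimality. *)

Section CliqueChains.
Variables (K : fieldType) (T : finType).
Implicit Types (c z b : chain K T) (s t S : {set T}) (u v w x : T).

Local Notation rk := (fun x : T => nat_of_ord (enum_rank x)).

Lemma rk_inj : injective rk.
Proof. by move=> x y /val_inj /enum_rank_inj. Qed.

Lemma fsign_setU1 x w S : x \notin S ->
  fsign K w (x |: S) = (if (rk x < rk w)%N then -1 else 1) * fsign K w S.
Proof.
move=> xS; rewrite /fsign; case: ifP => xw.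
  have -> : [set y in x |: S | (rk y < rk w)%N] = x |: [set y in S | (rk y < rk w)%N].
    by apply/setP => y; rewrite !inE; case: eqP => // ->; rewrite xw.
  by rewrite cardsU1 inE (negbTE xS) add1n exprS.
have -> : [set y in x |: S | (rk y < rk w)%N] = [set y in S | (rk y < rk w)%N].
  by apply/setP => y; rewrite !inE; case: eqP => // ->; rewrite xw (negbTE xS).
by rewrite mul1r.
Qed.

Lemma fsign_setU1_self w S : fsign K w (w |: S) = fsign K w S.
Proof.
rewrite /fsign; congr (_ ^+ _); apply: eq_card => y; rewrite !inE.
by case: eqP => // ->; rewrite ltnn !andbF.
Qed.

Lemma fsignMK v s (k : K) : fsign K v s * (fsign K v s * k) = k.
Proof. exact: signrMK. Qed.

Lemma rk_sign_opp u v : u != v ->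
  (if (rk u < rk v)%N then -1 else 1 : K) = - (if (rk v < rk u)%N then -1 else 1).
Proof.
move=> uv; have : rk u != rk v by rewrite (inj_eq rk_inj).
by rewrite neq_ltn => /orP[] lt; rewrite lt ltnNge ltnW //= opprK.
Qed.

Lemma fsign_swap u v S : u != v -> u \notin S -> v \notin S ->
  fsign K u S * fsign K v (u |: S) = - (fsign K v S * fsign K u (v |: S)).
Proof. by move=> uv uS vS; rewrite !fsign_setU1 // (rk_sign_opp uv); ring. Qed.

Lemma fsign_swapM u v S : u != v -> u \notin S -> v \notin S ->
  fsign K u (v |: S) * fsign K v (u |: S) = - (fsign K u S * fsign K v S).
Proof.
by move=> uv uS vS; rewrite !fsign_setU1 // (rk_sign_opp uv); case: ifP => _; ring.
Qed.

(* Pairs are matched by comparing ranks rather than by halving the double sum: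
   K may have characteristic 2. *)
Lemma sum_antisym_eq0 (P : rel T) (F : T -> T -> K) :
  symmetric P -> irreflexive P -> (forall u w, P u w -> F w u = - F u w) ->
  \sum_u \sum_(w | P u w) F u w = 0.
Proof.
move=> Ps Pi FN.
under eq_bigr => u _ do rewrite (bigID (fun w => (rk u < rk w)%N)) /=.
rewrite big_split /= [X in _ + X](exchange_big_dep predT) //=.
rewrite [X in _ + X](eq_bigr (fun u => \sum_(w | P u w && (rk u < rk w)%N) - F u w)).
  by under [X in _ + X]eq_bigr do rewrite sumrN; rewrite sumrN addrN.
move=> u _; apply: eq_big => [w|w /andP[Puw _]]; last by rewrite -FN // Ps.
rewrite Ps; case Puw: (P u w) => //=.
have uw : u != w by apply: contraTneq Puw => ->; rewrite Pi.
have : rk u != rk w by rewrite (inj_eq rk_inj).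
by rewrite -leqNgt leq_eqVlt eq_sym => /negbTE ->.
Qed.

Lemma bnd_neq0 c s : bnd c s != 0 -> exists2 u, u \notin s & c (u |: s) != 0.
Proof.
move=> bcs; have /existsP[u /andP[us cus]] : [exists u, (u \notin s) && (c (u |: s) != 0)].
  apply: contraNT bcs => /existsPn c0; rewrite ffunE big1 // => u us.
  by move: (c0 u); rewrite us negbK => /eqP ->; rewrite mulr0.
by exists u.
Qed.

Lemma bndD c1 c2 : bnd (c1 + c2) = bnd c1 + bnd c2.
Proof.
by apply/ffunP => t; rewrite !ffunE -big_split; apply: eq_bigr => u _; rewrite ffunE mulrDr.
Qed.

Lemma bndN c : bnd (- c) = - bnd c.
Proof.
by apply/ffunP => t; rewrite !ffunE -sumrN; apply: eq_bigr => u _; rewrite ffunE mulrN.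
Qed.

Lemma bnd_bnd c : bnd (bnd c) = 0.
Proof.
apply/ffunP => t; rewrite !ffunE big_mkcond /=.
rewrite (eq_bigr (fun u => \sum_(w | [&& u \notin t, w \notin t & u != w])
   fsign K u (u |: t) * (fsign K w (w |: (u |: t)) * c (w |: (u |: t))))).
  apply: sum_antisym_eq0 => [u w|u|u w /and3P[ut wt uw]]; first by rewrite andbCA eq_sym.
    by rewrite eqxx !andbF.
  by rewrite !mulrA !fsign_setU1_self (fsign_swap uw ut wt) mulNr opprK setUCA.
move=> u _; rewrite ffunE mulr_sumr; case: ifP => ut; last by rewrite big_pred0.
by apply: eq_bigl => w; rewrite !inE negb_or eq_sym andbC.
Qed.

Lemma vsupp_neq0 c s v : c s != 0 -> v \in s -> v \in vsupp c.
Proof. by move=> cs vs; rewrite inE; apply/existsP; exists s; rewrite cs. Qed.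

Lemma vsuppPn c v : reflect (forall s, v \in s -> c s = 0) (v \notin vsupp c).
Proof.
apply: (iffP idP) => [vc s vs|c0]; first by apply: contraNeq vc => /vsupp_neq0; apply.
rewrite inE; apply/existsPn => s.
by case: (boolP (v \in s)) => [/c0 ->|]; rewrite ?eqxx ?andbF.
Qed.

Lemma vsuppD c1 c2 : vsupp (c1 + c2) \subset vsupp c1 :|: vsupp c2.
Proof.
apply/subsetP => x; rewrite inE => /existsP[s /andP[]]; rewrite ffunE inE => cs xs.
have [c10|c1s] := eqVneq (c1 s) 0; last by rewrite (vsupp_neq0 c1s).
by rewrite c10 add0r in cs; rewrite (vsupp_neq0 cs xs) orbT.
Qed.

Lemma vsupp_bnd c : vsupp (bnd c) \subset vsupp c.
Proof.
apply/subsetP => x; rewrite inE => /existsP[s /andP[/bnd_neq0[u _ cus] xs]].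
exact: vsupp_neq0 cus (setU1r u xs).
Qed.

Lemma lk0 v : lk (0 : chain K T) v = 0.
Proof. by apply/ffunP => t; rewrite !ffunE; case: ifP; rewrite ?mulr0. Qed.

Lemma bnd_lk c v : bnd (lk c v) = - lk (bnd c) v.
Proof.
apply/ffunP => t; rewrite !ffunE; case: ifPn => vt.
  by rewrite oppr0; apply: big1 => u _; rewrite ffunE setU1r // mulr0.
rewrite mulr_sumr -sumrN (bigD1 v) //= ffunE setU11 mulr0 add0r.
apply: eq_big => [u|u /andP[ut uv]]; first by rewrite !inE negb_or andbC.
rewrite ffunE in_setU1 eq_sym (negbTE uv) (negbTE vt) /= !mulrA.
by rewrite !fsign_setU1_self (fsign_swap uv ut vt) mulNr setUCA.
Qed.

Definition cone v b : chain K T :=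
  [ffun s : {set T} => if v \in s then fsign K v s * b (s :\ v) else 0].

Lemma cone_lk z v s : v \in s -> cone v (lk z v) s = z s.
Proof. by move=> vs; rewrite !ffunE vs !inE eqxx /= setD1K // fsignMK. Qed.

Lemma vsupp_cone v b : vsupp (cone v b) \subset v |: vsupp b.
Proof.
apply/subsetP => x; rewrite inE => /existsP[s /andP[]]; rewrite ffunE.
case: ifP => [vs cs xs|_]; last by rewrite eqxx.
have bs : b (s :\ v) != 0 by apply: contraNneq cs => ->; rewrite mulr0.
by rewrite in_setU1; case: eqVneq => //= xv; apply: vsupp_neq0 bs _; rewrite !inE xv.
Qed.

Lemma bnd_cone v b :
  (forall s, v \in s -> b s = 0) -> bnd (cone v b) = b - cone v (bnd b).
Proof.
move=> b0; apply/ffunP => t; rewrite !ffunE; case: ifPn => vt; last first.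
  rewrite subr0 (bigD1 v) //= ffunE setU11 setU1K // fsignMK big1 ?addr0 // => u /andP[ut uv].
  by rewrite ffunE in_setU1 eq_sym (negbTE uv) (negbTE vt) mulr0.
have [S vS ->] : exists2 S : {set T}, v \notin S & t = v |: S.
  by exists (t :\ v); rewrite ?setD1K // !inE eqxx.
rewrite b0 ?setU11 // sub0r setU1K // [in RHS](bigD1 v) //= b0 ?setU11 // mulr0 add0r.
rewrite mulr_sumr -sumrN; apply: eq_big => [u|u]; first by rewrite !inE negb_or andbC.
rewrite in_setU1 negb_or => /andP[uv uS].
have vuS : v \notin u |: S by rewrite !inE negb_or eq_sym uv.
rewrite ffunE (setU1r u (setU11 v S)) !fsign_setU1_self (setUCA [set u]).
by rewrite fsign_setU1_self setU1K // !mulrA (fsign_swapM uv uS vS); ring.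
Qed.

Lemma notin_vsupp_addr_bnd_cone z v b : (forall s, v \in s -> b s = 0) ->
  bnd b = lk z v -> v \notin vsupp (z + bnd (cone v b)).
Proof.
move=> b0 lkb; apply/vsuppPn => s vs; rewrite ffunE bnd_cone // lkb.
by rewrite [X in _ + X]ffunE [X in _ + (_ + X)]ffunE b0 // cone_lk // add0r subrr.
Qed.

Section CliqueComplex.
Variable e : rel T.
Implicit Types (A : {set T}).

Lemma clique_subset A s s' : is_clique e A s -> s' \subset s -> is_clique e A s'.
Proof.
move=> /andP[sA /forall_inP cl] s's; apply/andP; split; first exact: subset_trans sA.
apply/forall_inP => u us; apply/forall_inP => w ws.
exact: (forall_inP (cl u (subsetP s's u us)) w (subsetP s's w ws)).
Qed.

Lemma chainD A k c1 c2 :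
  is_chain e A k c1 -> is_chain e A k c2 -> is_chain e A k (c1 + c2).
Proof.
move=> h1 h2 s; rewrite ffunE; have [c10|c1s _] := eqVneq (c1 s) 0; last exact: h1.
by rewrite c10 add0r; apply: h2.
Qed.

Lemma chainN A k c : is_chain e A k c -> is_chain e A k (- c).
Proof. by move=> hc s; rewrite ffunE oppr_eq0; apply: hc. Qed.

Lemma bnd_chain A k c : is_chain e A k.+1 c -> is_chain e A k (bnd c).
Proof.
move=> hc s /bnd_neq0[u us /hc[cl sz]]; split; first exact: clique_subset cl (subsetUr _ _).
by move: sz; rewrite cardsU1 us add1n => -[].
Qed.

Lemma boundaryB A k z c :
  is_boundary e A k z -> is_chain e A k.+1 c -> is_boundary e A k (z - bnd c).
Proof.
move=> [b [bch <-]] cch; exists (b - c); split; first exact: chainD (chainN cch).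
by rewrite bndD bndN.
Qed.

Lemma nontriv_cycleD_bnd A k z c :
  nontriv_cycle e A k z -> is_chain e A k.+1 c -> nontriv_cycle e A k (z + bnd c).
Proof.
move=> [zch zcyc znb] cch; split.
- exact: chainD (bnd_chain cch).
- by rewrite bndD zcyc bnd_bnd addr0.
by move=> /boundaryB /(_ cch); rewrite addrK.
Qed.

Lemma vsupp_chain A k c : is_chain e A k c -> vsupp c \subset A.
Proof.
move=> hc; apply/subsetP => x; rewrite inE => /existsP[s /andP[/hc[/andP[sA _] _]]].
exact: (subsetP sA).
Qed.

Lemma lk_chain k z v :
  is_chain e setT k.+1 z -> is_chain e (Nz e z v) k (lk z v).
Proof.
move=> zch s; rewrite ffunE; case: ifPn => [_|vs]; first by rewrite eqxx.
have [->|zs _] := eqVneq (z (v |: s)) 0; first by rewrite mulr0 eqxx.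
have [/andP[_ /forall_inP cl] sz] := zch _ zs; split; last first.
  by move: sz; rewrite cardsU1 vs add1n => -[].
apply/andP; split.
  apply/subsetP => u us; rewrite inE (vsupp_neq0 zs (setU1r v us)) andbT.
  have := forall_inP (cl v (setU11 v s)) u (setU1r v us).
  by move/implyP; apply; apply: contraNneq vs => ->.
apply/forall_inP => u us; apply/forall_inP => w ws.
exact: (forall_inP (cl u (setU1r v us)) w (setU1r v ws)).
Qed.

Lemma cone_chain (e_sym : symmetric e) A k v b :
  (forall u, u \in A -> e v u) -> is_chain e A k b -> is_chain e setT k.+1 (cone v b).
Proof.
move=> eA bch s; rewrite ffunE; case: ifPn => [vs|_]; last by rewrite eqxx.
have [->|/bch[/andP[sA /forall_inP cl] sz] _] := eqVneq (b (s :\ v)) 0.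
  by rewrite mulr0 eqxx.
split; last by rewrite (cardsD1 v s) vs sz.
have eAv u : u \in s -> u != v -> e v u.
  by move=> us uv; apply/eA/(subsetP sA); rewrite !inE uv.
apply/andP; split; first exact: subsetT.
apply/forall_inP => u us; apply/forall_inP => w ws; apply/implyP => uw.
have [uv|uv] := eqVneq u v; first by subst u; apply: eAv; rewrite // eq_sym.
have [wv|wv] := eqVneq w v; first by subst w; rewrite e_sym; apply: eAv.
by have := forall_inP (cl u _) w; rewrite !inE uv wv us ws uw => /(_ isT isT).
Qed.

End CliqueComplex.

End CliqueChains.

Theorem lemma3p2 (K : fieldType) (T : finType) (e : rel T)
  (e_sym : symmetric e) (e_irr : irreflexive e)
  (d : nat) (z : chain K T) (zmin : d_minimal e d z)
  (v : T) (vz : v \in vsupp z) :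
  nontriv_cycle e (Nz e z v) d (lk z v).
Proof.
move: zmin => [znt zmin]; have [zch zbnd _] := znt.
set A := Nz e z v.
have vA : v \notin A by rewrite inE e_irr.
have eA u : u \in A -> e v u by rewrite inE => /andP[].
have AV : A \subset vsupp z by apply/subsetP => u; rewrite inE => /andP[].
split; [exact: lk_chain | by rewrite bnd_lk zbnd lk0 oppr0 | move=> [b [bch lkb]]].
have b0 : forall s : {set T}, v \in s -> b s = 0.
  by apply/vsuppPn; apply: contra vA; apply: (subsetP (vsupp_chain bch)).
have z'nt := nontriv_cycleD_bnd znt (cone_chain e_sym eA bch).
apply: zmin z'nt _; rewrite properE; apply/andP; split.
  apply: subset_trans (vsuppD _ _) _; rewrite subUset subxx /=.
  apply: subset_trans (vsupp_bnd _) _; apply: subset_trans (vsupp_cone _ _) _.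
  by rewrite subUset sub1set vz (subset_trans (vsupp_chain bch) AV).
by apply/subsetPn; exists v; last exact: notin_vsupp_addr_bnd_cone.
Qed.
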